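(* Let $\mathcal{A}$ be an abelian category and consider a commutative diagram in $\mathcal{A}$ consisting of exact sequences $Q_1\xrightarrow{a}P_1\xrightarrow{p_1}F_1\to0$ and $Q_2\xrightarrow{d}P_2\xrightarrow{p_2}F_2\to 0$, together with morphisms $b:Q_1\to Q_2$, $c:P_1\to P_2$ and $h:F_1\to F_2$ such that $ca=db$ and $hp_1=p_2c$. Then for any object $M\in\mathcal{A}$ the following are equivalent: (1) the induced map $\mathrm{Hom}(F_2,M)\to\mathrm{Hom}(F_1,M)$, $\psi\mapsto\psi h$, is surjective; (2) let $\mu:Q_1\oplus Q_2\to P_1\oplus Q_2$ be the morphism with components $a:Q_1\to P_1$, $0:Q_2\to P_1$, $b:Q_1\to Q_2$, $-1:Q_2\to Q_2$, and let $\nu:P_1\oplus Q_2\to P_2$ be the morphism with components $c:P_1\to P_2$ and $-d:Q_2\to P_2$; then for every morphism $\varphi:P_1\oplus Q_2\to M$ with $\varphi\mu=0$ there exists a morphism $\gamma:P_2\to M$ with $\gamma\nu=\varphi$. *)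

Record AdditiveCategory := {
  Ob : Type;
  Hom : Ob -> Ob -> Type;
  comp : forall {X Y Z : Ob}, Hom Y Z -> Hom X Y -> Hom X Z;
  idm : forall X : Ob, Hom X X;
  addm : forall {X Y : Ob}, Hom X Y -> Hom X Y -> Hom X Y;
  zerom : forall X Y : Ob, Hom X Y;
  oppm : forall {X Y : Ob}, Hom X Y -> Hom X Y;
  comp_assoc : forall (W X Y Z : Ob) (f : Hom Y Z) (g : Hom X Y) (h : Hom W X),
      comp f (comp g h) = comp (comp f g) h;
  comp_id_l : forall (X Y : Ob) (f : Hom X Y), comp (idm Y) f = f;
  comp_id_r : forall (X Y : Ob) (f : Hom X Y), comp f (idm X) = f;
  addmA : forall (X Y : Ob) (f g h : Hom X Y), addm f (addm g h) = addm (addm f g) h;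
  addmC : forall (X Y : Ob) (f g : Hom X Y), addm f g = addm g f;
  add0m : forall (X Y : Ob) (f : Hom X Y), addm (zerom X Y) f = f;
  addNm : forall (X Y : Ob) (f : Hom X Y), addm (oppm f) f = zerom X Y;
  comp_addl : forall (X Y Z : Ob) (f g : Hom Y Z) (h : Hom X Y),
      comp (addm f g) h = addm (comp f h) (comp g h);
  comp_addr : forall (X Y Z : Ob) (f : Hom Y Z) (g h : Hom X Y),
      comp f (addm g h) = addm (comp f g) (comp f h);
  has_zero_object : exists Z : Ob, idm Z = zerom Z Z;
  bip : Ob -> Ob -> Ob;
  bip_inl : forall X Y : Ob, Hom X (bip X Y);
  bip_inr : forall X Y : Ob, Hom Y (bip X Y);
  bip_prl : forall X Y : Ob, Hom (bip X Y) X;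
  bip_prr : forall X Y : Ob, Hom (bip X Y) Y;
  bip_ll : forall X Y : Ob, comp (bip_prl X Y) (bip_inl X Y) = idm X;
  bip_rr : forall X Y : Ob, comp (bip_prr X Y) (bip_inr X Y) = idm Y;
  bip_lr : forall X Y : Ob, comp (bip_prl X Y) (bip_inr X Y) = zerom Y X;
  bip_rl : forall X Y : Ob, comp (bip_prr X Y) (bip_inl X Y) = zerom X Y;
  bip_sum : forall X Y : Ob,
      addm (comp (bip_inl X Y) (bip_prl X Y)) (comp (bip_inr X Y) (bip_prr X Y))
      = idm (bip X Y)
}.

Arguments comp {_ X Y Z} f g.
Arguments addm {_ X Y} f g.
Arguments oppm {_ X Y} f.
Arguments zerom {_} X Y.
Arguments idm {_} X.
Arguments bip {_} X Y.
Arguments bip_inl {_} X Y.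
Arguments bip_inr {_} X Y.
Arguments bip_prl {_} X Y.
Arguments bip_prr {_} X Y.

Section Defs.
Context {C : AdditiveCategory}.

Definition Mono {X Y : Ob C} (f : Hom C X Y) : Prop :=
  forall (W : Ob C) (g h : Hom C W X), comp f g = comp f h -> g = h.

Definition Epi {X Y : Ob C} (f : Hom C X Y) : Prop :=
  forall (W : Ob C) (g h : Hom C Y W), comp g f = comp h f -> g = h.

Definition is_kernel {X Y K : Ob C} (f : Hom C X Y) (k : Hom C K X) : Prop :=
  comp f k = zerom K Y /\
  forall (W : Ob C) (g : Hom C W X), comp f g = zerom W Y ->
    exists! u : Hom C W K, comp k u = g.

Definition is_cokernel {X Y Q : Ob C} (f : Hom C X Y) (q : Hom C Y Q) : Prop :=
  comp q f = zerom X Q /\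
  forall (W : Ob C) (g : Hom C Y W), comp g f = zerom X W ->
    exists! u : Hom C Q W, comp u q = g.

Definition is_image {X Y I : Ob C} (f : Hom C X Y) (m : Hom C I Y) : Prop :=
  exists (Q : Ob C) (q : Hom C Y Q), is_cokernel f q /\ is_kernel q m.

Definition exact_at {X Y Z : Ob C} (f : Hom C X Y) (g : Hom C Y Z) : Prop :=
  exists (I : Ob C) (m : Hom C I Y), is_image f m /\ is_kernel g m.

End Defs.

Record AbelianCategory := {
  acat :> AdditiveCategory;
  has_kernels : forall (X Y : Ob acat) (f : Hom acat X Y),
      exists (K : Ob acat) (k : Hom acat K X), is_kernel f k;
  has_cokernels : forall (X Y : Ob acat) (f : Hom acat X Y),
      exists (Q : Ob acat) (q : Hom acat Y Q), is_cokernel f q;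
  mono_normal : forall (K X : Ob acat) (k : Hom acat K X), Mono k ->
      exists (Y : Ob acat) (f : Hom acat X Y), is_kernel f k;
  epi_normal : forall (Y Q : Ob acat) (q : Hom acat Y Q), Epi q ->
      exists (X : Ob acat) (f : Hom acat X Y), is_cokernel f q
}.


(* A morphism φ out of P1 ⊕ Q2 kills μ exactly when it vanishes on Q2 and its
   P1-component f satisfies f a = 0, and γ ν = φ means γ c = f and γ d = 0.
   So (2) says that every f : P1 → M with f a = 0 is of the form γ c with
   γ d = 0.  By right exactness the maps killing a are the φ' p1 and those
   killing d are the ψ p2; as p1 is epi, ψ p2 c = ψ h p1 equals φ' p1 iff
   ψ h = φ', which is (1). *)

Section Additive.
Context {C : AdditiveCategory}.

Lemma addm0 (X Y : Ob C) (f : Hom C X Y) : addm f (zerom X Y) = f.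
Proof. rewrite addmC. apply add0m. Qed.

Lemma addmN (X Y : Ob C) (f : Hom C X Y) : addm f (oppm f) = zerom X Y.
Proof. rewrite addmC. apply addNm. Qed.

Lemma oppm_unique (X Y : Ob C) (f g : Hom C X Y) :
  addm g f = zerom X Y -> g = oppm f.
Proof.
  intro H. rewrite <- (add0m _ _ _ (oppm f)), <- H, <- addmA, addmN, addm0.
  reflexivity.
Qed.

Lemma addm_idem_eq0 (X Y : Ob C) (f : Hom C X Y) : addm f f = f -> f = zerom X Y.
Proof.
  intro H. transitivity (addm (oppm f) (addm f f)).
  - rewrite addmA, addNm, add0m. reflexivity.
  - rewrite H. apply addNm.
Qed.

Lemma comp0l (X Y Z : Ob C) (f : Hom C X Y) : comp (zerom Y Z) f = zerom X Z.
Proof. apply addm_idem_eq0. rewrite <- comp_addl, add0m. reflexivity. Qed.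

Lemma comp0r (X Y Z : Ob C) (f : Hom C Y Z) : comp f (zerom X Y) = zerom X Z.
Proof. apply addm_idem_eq0. rewrite <- comp_addr, add0m. reflexivity. Qed.

Lemma comp_oppl (X Y Z : Ob C) (f : Hom C Y Z) (g : Hom C X Y) :
  comp (oppm f) g = oppm (comp f g).
Proof. apply oppm_unique. rewrite <- comp_addl, addNm. apply comp0l. Qed.

Lemma comp_oppr (X Y Z : Ob C) (f : Hom C Y Z) (g : Hom C X Y) :
  comp f (oppm g) = oppm (comp f g).
Proof. apply oppm_unique. rewrite <- comp_addr, addNm. apply comp0r. Qed.

Lemma oppm0 (X Y : Ob C) : oppm (zerom X Y) = zerom X Y.
Proof. symmetry. apply oppm_unique, add0m. Qed.

Lemma oppmK (X Y : Ob C) (f : Hom C X Y) : oppm (oppm f) = f.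
Proof. symmetry. apply oppm_unique, addmN. Qed.

Lemma oppm_eq0 (X Y : Ob C) (f : Hom C X Y) : oppm f = zerom X Y -> f = zerom X Y.
Proof. intro H. rewrite <- (oppmK _ _ f), H. apply oppm0. Qed.

Lemma comp_assoc_r (W X Y Z : Ob C) (f : Hom C Y Z) (g : Hom C X Y) (h : Hom C W X) :
  comp (comp f g) h = comp f (comp g h).
Proof. symmetry. apply comp_assoc. Qed.

Lemma bip_ext (X Y Z : Ob C) (f g : Hom C (bip X Y) Z) :
  comp f (bip_inl X Y) = comp g (bip_inl X Y) ->
  comp f (bip_inr X Y) = comp g (bip_inr X Y) -> f = g.
Proof.
  intros Hl Hr.
  rewrite <- (comp_id_r _ _ _ f), <- (comp_id_r _ _ _ g), <- bip_sum,
    !comp_addr, !comp_assoc, Hl, Hr.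
  reflexivity.
Qed.

End Additive.

Create HintDb additive.
Hint Rewrite comp_addl comp_addr @comp_oppl @comp_oppr @comp_assoc_r
  bip_ll bip_rr bip_lr bip_rl @comp0l @comp0r comp_id_l comp_id_r
  add0m @addm0 @oppm0 @oppmK : additive.

Section LiftThroughNu.
Context {C : AdditiveCategory}.
Variables (Q1 P1 Q2 P2 : Ob C).
Variables (a : Hom C Q1 P1) (b : Hom C Q1 Q2) (c : Hom C P1 P2) (d : Hom C Q2 P2).

Definition mu_map : Hom C (bip Q1 Q2) (bip P1 Q2) :=
  addm (comp (bip_inl P1 Q2) (comp a (bip_prl Q1 Q2)))
       (comp (bip_inr P1 Q2)
             (addm (comp b (bip_prl Q1 Q2)) (oppm (bip_prr Q1 Q2)))).

Definition nu_map : Hom C (bip P1 Q2) P2 :=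
  addm (comp c (bip_prl P1 Q2)) (oppm (comp d (bip_prr P1 Q2))).

Lemma mu_map_inl :
  comp mu_map (bip_inl Q1 Q2) = addm (comp (bip_inl P1 Q2) a) (comp (bip_inr P1 Q2) b).
Proof. unfold mu_map. autorewrite with additive. reflexivity. Qed.

Lemma mu_map_inr : comp mu_map (bip_inr Q1 Q2) = oppm (bip_inr P1 Q2).
Proof. unfold mu_map. autorewrite with additive. reflexivity. Qed.

Lemma nu_map_inl : comp nu_map (bip_inl P1 Q2) = c.
Proof. unfold nu_map. autorewrite with additive. reflexivity. Qed.

Lemma nu_map_inr : comp nu_map (bip_inr P1 Q2) = oppm d.
Proof. unfold nu_map. autorewrite with additive. reflexivity. Qed.

Variable M : Ob C.

Lemma comp_mu_map_eq0 (phi : Hom C (bip P1 Q2) M) :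
  comp phi mu_map = zerom (bip Q1 Q2) M <->
  comp phi (bip_inr P1 Q2) = zerom Q2 M /\
  comp (comp phi (bip_inl P1 Q2)) a = zerom Q1 M.
Proof.
  split.
  - intro H.
    assert (Hr := f_equal (fun x => comp x (bip_inr Q1 Q2)) H).
    assert (Hl := f_equal (fun x => comp x (bip_inl Q1 Q2)) H).
    simpl in Hr, Hl.
    rewrite comp_assoc_r, mu_map_inr, comp_oppr, comp0l in Hr.
    apply oppm_eq0 in Hr.
    rewrite comp_assoc_r, mu_map_inl, comp_addr, !comp_assoc, Hr, comp0l, addm0,
      comp0l in Hl.
    split; assumption.
  - intros [Hr Hl]. apply bip_ext.
    + rewrite comp_assoc_r, mu_map_inl, comp_addr, !comp_assoc, Hr, Hl, comp0l, add0m.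
      symmetry. apply comp0l.
    + rewrite comp_assoc_r, mu_map_inr, comp_oppr, Hr, oppm0. symmetry. apply comp0l.
Qed.

Lemma comp_nu_map_eq (gamma : Hom C P2 M) (phi : Hom C (bip P1 Q2) M) :
  comp gamma nu_map = phi <->
  comp gamma c = comp phi (bip_inl P1 Q2) /\
  comp gamma d = oppm (comp phi (bip_inr P1 Q2)).
Proof.
  split.
  - intros <-. rewrite !comp_assoc_r, nu_map_inl, nu_map_inr, comp_oppr, oppmK.
    split; reflexivity.
  - intros [Hl Hr]. apply bip_ext.
    + rewrite comp_assoc_r, nu_map_inl. exact Hl.
    + rewrite comp_assoc_r, nu_map_inr, comp_oppr, Hr. apply oppmK.
Qed.

Lemma lift_through_nu_map_iff :
  (forall phi : Hom C (bip P1 Q2) M, comp phi mu_map = zerom (bip Q1 Q2) M ->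
     exists gamma : Hom C P2 M, comp gamma nu_map = phi) <->
  (forall f : Hom C P1 M, comp f a = zerom Q1 M ->
     exists gamma : Hom C P2 M, comp gamma c = f /\ comp gamma d = zerom Q2 M).
Proof.
  split.
  - intros Hlift f Hf.
    destruct (Hlift (comp f (bip_prl P1 Q2))) as [gamma Hgamma].
    { apply comp_mu_map_eq0. split.
      - rewrite comp_assoc_r, bip_lr. apply comp0r.
      - rewrite (comp_assoc_r _ _ _ _ f), bip_ll, comp_id_r. exact Hf. }
    exists gamma.
    apply comp_nu_map_eq in Hgamma. autorewrite with additive in Hgamma.
    exact Hgamma.
  - intros Hlift phi Hphi.
    apply comp_mu_map_eq0 in Hphi. destruct Hphi as [Hr Hl].
    destruct (Hlift _ Hl) as [gamma [Hc Hd]].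
    exists gamma. apply comp_nu_map_eq. rewrite Hc, Hd, Hr, oppm0.
    split; reflexivity.
Qed.

End LiftThroughNu.

Section RightExact.
Context {A : AbelianCategory}.

Lemma exact_at_comp_eq0 (X Y Z : Ob A) (f : Hom A X Y) (g : Hom A Y Z) :
  exact_at f g -> comp g f = zerom X Z.
Proof.
  intros [I [m [[Q [q [[Hqf _] [_ Hm]]]] [Hgm _]]]].
  destruct (Hm X f Hqf) as [u [Hu _]].
  rewrite <- Hu, comp_assoc, Hgm. apply comp0l.
Qed.

Lemma right_exact_hom_iff (X Y Z W : Ob A) (f : Hom A X Y) (g : Hom A Y Z)
    (k : Hom A Y W) :
  exact_at f g -> Epi g ->
  comp k f = zerom X W <-> exists u : Hom A Z W, comp u g = k.
Proof.
  intros Hex Hepi. split.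
  - intro Hk.
    destruct Hex as [I [m [[Q [q [[_ Hq] [Hqm _]]]] [Hgm Hg]]]].
    destruct (Hq W k Hk) as [v [Hv _]].
    destruct (epi_normal A _ _ g Hepi) as [X0 [f0 [Hgf0 Hcok]]].
    destruct (Hg X0 f0 Hgf0) as [w [Hw _]].
    destruct (Hcok W k) as [u [Hu _]].
    + rewrite <- Hw, <- Hv, comp_assoc_r, (comp_assoc _ _ _ _ _ q m w), Hqm,
        comp0l.
      apply comp0r.
    + exists u. exact Hu.
  - intros [u <-]. rewrite comp_assoc_r, (exact_at_comp_eq0 _ _ _ _ _ Hex).
    apply comp0r.
Qed.

Lemma precomp_surjective_iff_lift (Q1 P1 F1 Q2 P2 F2 M : Ob A)
    (a : Hom A Q1 P1) (p1 : Hom A P1 F1) (d : Hom A Q2 P2) (p2 : Hom A P2 F2)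
    (c : Hom A P1 P2) (h : Hom A F1 F2) :
  exact_at a p1 -> Epi p1 -> exact_at d p2 -> Epi p2 ->
  comp h p1 = comp p2 c ->
  (forall phi : Hom A F1 M, exists psi : Hom A F2 M, comp psi h = phi) <->
  (forall f : Hom A P1 M, comp f a = zerom Q1 M ->
     exists gamma : Hom A P2 M, comp gamma c = f /\ comp gamma d = zerom Q2 M).
Proof.
  intros ex1 epi1 ex2 epi2 comm. split.
  - intros Hsurj f Hf.
    apply (right_exact_hom_iff _ _ _ _ _ _ _ ex1 epi1) in Hf.
    destruct Hf as [phi <-].
    destruct (Hsurj phi) as [psi <-].
    exists (comp psi p2). split.
    + rewrite comp_assoc_r, <- comm. apply comp_assoc.
    + apply (right_exact_hom_iff _ _ _ _ _ _ _ ex2 epi2). exists psi. reflexivity.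
  - intros Hlift phi.
    destruct (Hlift (comp phi p1)) as [gamma [Hc Hd]].
    { apply (right_exact_hom_iff _ _ _ _ _ _ _ ex1 epi1). exists phi. reflexivity. }
    apply (right_exact_hom_iff _ _ _ _ _ _ _ ex2 epi2) in Hd.
    destruct Hd as [psi <-].
    exists psi. apply epi1.
    rewrite comp_assoc_r, comm, comp_assoc. exact Hc.
Qed.

End RightExact.

Theorem lemma3p4 (A : AbelianCategory)
  (Q1 P1 F1 Q2 P2 F2 : Ob A)
  (a : Hom A Q1 P1) (p1 : Hom A P1 F1)
  (d : Hom A Q2 P2) (p2 : Hom A P2 F2)
  (b : Hom A Q1 Q2) (c : Hom A P1 P2) (h : Hom A F1 F2)
  (* Q1 --a--> P1 --p1--> F1 --> 0 exact *)
  (ex1 : exact_at a p1) (epi1 : Epi p1)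
  (* Q2 --d--> P2 --p2--> F2 --> 0 exact *)
  (ex2 : exact_at d p2) (epi2 : Epi p2)
  (* commutativity *)
  (comm1 : comp c a = comp d b) (comm2 : comp h p1 = comp p2 c)
  (M : Ob A) :
  let mu : Hom A (bip Q1 Q2) (bip P1 Q2) :=
    addm (comp (bip_inl P1 Q2) (comp a (bip_prl Q1 Q2)))
         (comp (bip_inr P1 Q2)
               (addm (comp b (bip_prl Q1 Q2)) (oppm (bip_prr Q1 Q2)))) in
  let nu : Hom A (bip P1 Q2) P2 :=
    addm (comp c (bip_prl P1 Q2)) (oppm (comp d (bip_prr P1 Q2))) in
  (forall phi : Hom A F1 M, exists psi : Hom A F2 M, comp psi h = phi)
  <->
  (forall phi : Hom A (bip P1 Q2) M, comp phi mu = zerom (bip Q1 Q2) M ->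
     exists gamma : Hom A P2 M, comp gamma nu = phi).
Proof.
  intros mu nu.
  (* [comm1] only makes the sequence through μ and ν a complex. *)
  exact (iff_trans
           (precomp_surjective_iff_lift _ _ _ _ _ _ M a p1 d p2 c h ex1 epi1 ex2 epi2 comm2)
           (iff_sym (lift_through_nu_map_iff _ _ _ _ a b c d M))).
Qed.
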